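(* In the truncated Gale–Shapley algorithm described in the context, with a weight function $w$ respecting the preferences, for every $i\ge 2$ we have $w(L_i)\ge (i-1)\,f_i(R)$.
   Context: Instance: a simple bipartite graph $\mathcal{G}=(R\cup B,E)$ (red nodes $R$, blue nodes $B$) without isolated nodes, each node having a linear preference order on its neighbours. Algorithm (distributed Gale–Shapley): each blue $b$ keeps $p(b)$ (current partner or $\bot$), initially $\bot$. Each red $r$ keeps a list $C(r)$, initially all neighbours in decreasing preference; $c(r)$ (candidate awaiting response, or $\bot$), initially $\bot$; $p(r)$ (partner or $\bot$), initially $\bot$. Each round consists of a blue turn then a red turn. Blue turn, for each $b$: let $P$ be the set of neighbours that sent `propose'; if $P=\emptyset$ do nothing. Otherwise let $Q=P\cup\{p(b)\}$ if $p(b)\ne\bot$, else $Q=P$; let $q$ be $b$'s most preferred node in $Q$; if $q\ne p(b)$, send `break' to $p(b)$ (if $p(b)\ne\bot$), send `accept' to $q$, and set $p(b)\gets q$; send `reject' to every $r\in P\setminus\{q\}$. Red turn, for each $r$: (1) if $c(r)\neq\bot$, receive the message from $c(r)$; if `accept' set $p(r)\gets c(r)$; if `reject' remove $c(r)$ from $C(r)$; then set $c(r)\gets\bot$. (2) If $p(r)\ne\bot$ and $p(r)$ sent `break', remove $p(r)$ from $C(r)$ and set $p(r)\gets\bot$. (3) If $p(r)=\bot$ and $C(r)$ is nonempty, set $c(r)$ to the first element of $C(r)$ and send `propose' to it. Notation: a subscript $i$ denotes the value at the end of round $i$. An edge $\{r,b\}$ is lost when $r$ removes $b$ from $C(r)$;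 $L_i\subseteq E$ is the set of edges lost by the end of round $i$. Let $w:E\to\mathbb{Z}_{>0}$ be a weight function respecting preferences: whenever a node $v$ prefers $x$ over $y$, $w(\{v,x\})\ge w(\{v,y\})$; $w(F)=\sum_{e\in F}w(e)$. The potential of $r\in R$ at the end of round $i$ is $f_i(r)=0$ if $r$ is matched ($p_i(r)\neq\bot$) or $C_i(r)$ is empty, and otherwise $f_i(r)=w(\{r,b\})$ where $b$ is the first element of $C_i(r)$; $f_i(R)=\sum_{r\in R}f_i(r)$. *)

From mathcomp Require Import all_boot.
Set Implicit Arguments. Unset Strict Implicit. Unset Printing Implicit Defensive.

Section GaleShapley.
Variables (R B : finType).
Variable adj : R -> B -> bool.
(* prefR r : neighbours of r in decreasing preference;
   prefB b : neighbours of b in decreasing preference *)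
Variable prefR : R -> seq B.
Variable prefB : B -> seq R.

Definition prefersR (r : R) (x y : B) := index x (prefR r) < index y (prefR r).
Definition prefersB (b : B) (x y : R) := index x (prefB b) < index y (prefB b).

Definition valid_instance : Prop :=
  [/\ (forall r, exists b, adj r b),
      (forall b, exists r, adj r b),
      (forall r, uniq (prefR r) /\ forall b, (b \in prefR r) = adj r b)
    & (forall b, uniq (prefB b) /\ forall r, (r \in prefB b) = adj r b)].

Definition respects_prefs (w : R -> B -> nat) : Prop :=
  [/\ (forall r b, adj r b -> 0 < w r b),
      (forall r x y, adj r x -> adj r y -> prefersR r x y -> w r y <= w r x)
    & (forall b x y, adj x b -> adj y b -> prefersB b x y -> w y b <= w x b)].

Record state := State {
  pb : B -> option R;
  cand : R -> option B;
  pr : R -> option B;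
  Cl : R -> seq B
}.

Definition init : state :=
  State (fun _ => None) (fun _ => None) (fun _ => None) prefR.

(* ---- blue turn (uses proposals sent in the previous red turn, i.e.
   c(r) at the end of the previous round) ---- *)
Definition has_prop (s : state) (b : B) := [exists r, cand s r == Some b].

Definition bchoice (s : state) (b : B) : option R :=
  ohead [seq r <- prefB b | (cand s r == Some b) || (pb s b == Some r)].

Definition switches (s : state) (b : B) :=
  [&& has_prop s b, bchoice s b != None & bchoice s b != pb s b].

Definition msg_accept (s : state) (b : B) (r : R) :=
  switches s b && (bchoice s b == Some r).
Definition msg_break (s : state) (b : B) (r : R) :=
  switches s b && (pb s b == Some r).
Definition msg_reject (s : state) (b : B) (r : R) :=
  (cand s r == Some b) && (bchoice s b != Some r).

Definition new_pb (s : state) (b : B) : option R :=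
  if switches s b then bchoice s b else pb s b.

Definition red_step1 (s : state) (r : R) : option B * seq B :=
  match cand s r with
  | Some b => (if msg_accept s b r then Some b else pr s r,
               if msg_reject s b r then filter (predC1 b) (Cl s r) else Cl s r)
  | None => (pr s r, Cl s r)
  end.

Definition red_step2 (s : state) (r : R) : option B * seq B :=
  let pc := red_step1 s r in
  match pc.1 with
  | Some b' => if msg_break s b' r then (None, filter (predC1 b') pc.2) else pc
  | None => pc
  end.

Definition new_pr (s : state) (r : R) := (red_step2 s r).1.
Definition new_C (s : state) (r : R) := (red_step2 s r).2.
Definition new_cand (s : state) (r : R) : option B :=
  if new_pr s r == None then ohead (new_C s r) else None.

Definition round (s : state) : state :=
  State (new_pb s) (new_cand s) (new_pr s) (new_C s).

(* state at the end of round i (round 0 = initial state) *)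
Definition st (i : nat) : state := iter i round init.

Definition lost (i : nat) : {set R * B} :=
  [set e | (e.2 \in Cl init e.1) && (e.2 \notin Cl (st i) e.1)].

Definition wset (w : R -> B -> nat) (F : {set R * B}) : nat :=
  \sum_(e in F) w e.1 e.2.

Definition pot (w : R -> B -> nat) (i : nat) (r : R) : nat :=
  match pr (st i) r, Cl (st i) r with
  | None, b :: _ => w r b
  | _, _ => 0
  end.

Definition potR (w : R -> B -> nat) (i : nat) : nat := \sum_(r : R) pot w i r.

End GaleShapley.

From mathcomp Require Import all_boot.
Set Implicit Arguments. Unset Strict Implicit. Unset Printing Implicit Defensive.

(* A red r that ends a round free with a nonempty list has just lost the edge
   to the former head x of its list (a rejected proposal, or a match broken by
   x), and its new potential is at most w(r,x). Hence
   w(L_{i+1}) >= w(L_i) + f_{i+1}(R) for i >= 1. From round 1 on, f(R) does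
   not increase either: a red free before and after the round is charged to
   its own previous potential, and a red dropped by b to the red r' that b
   accepted instead, whose previous potential is w(r',b) >= w(r,b) by b's
   preference; this charging is injective. Summing over the rounds 2, ..., i
   gives w(L_i) >= f_2(R) + ... + f_i(R) >= (i-1) f_i(R). *)

Lemma mem_ohead (T : eqType) (s : seq T) x : ohead s = Some x -> x \in s.
Proof. by case: s => //= y s [->]; rewrite mem_head. Qed.

Lemma index_head_subseq_lt (T : eqType) (s C : seq T) x y :
  uniq s -> subseq (x :: C) s -> y \in C -> index x s < index y s.
Proof.
elim: s => [|z s IH] //= /andP[zNs us].
have zNy : y \in s -> (z == y) = false by move=> ys; apply: contraNF zNs => /eqP->.
case: (x =P z) => [xz | /eqP/negPf xz] sub yC.
  by rewrite xz eqxx zNy // (mem_subseq sub).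
rewrite eq_sym xz zNy ?ltnS ?IH //.
by apply: (mem_subseq sub); rewrite inE yC orbT.
Qed.

Section Round.
Variables (R B : finType) (prefR : R -> seq B) (prefB : B -> seq R).
Implicit Types (s : state R B) (r : R) (b : B).

Definition consistent s :=
  [/\ forall r b, cand s r = Some b -> pr s r = None /\ ohead (Cl s r) = Some b,
      forall r b, pr s r = Some b -> ohead (Cl s r) = Some b,
      forall r, subseq (Cl s r) (prefR r)
    & forall r b, (pb s b == Some r) = (pr s r == Some b)].

Lemma consistent_init : consistent (init prefR).
Proof. by split => //= r; apply: subseq_refl. Qed.

Lemma switches_cand s b r :
  switches prefB s b -> bchoice prefB s b = Some r -> cand s r = Some b.
Proof.
move=> + Hb; rewrite /switches Hb => /and3P[_ _ pbNr].
have /mem_ohead := Hb; rewrite mem_filter => /andP[/orP[/eqP // | pbr] _].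
by rewrite eq_sym pbr in pbNr.
Qed.

Lemma new_C_subseq s r : subseq (new_C prefB s r) (Cl s r).
Proof.
have step1 : subseq (red_step1 prefB s r).2 (Cl s r).
  rewrite /red_step1; case: (cand s r) => [b|] /=; last exact: subseq_refl.
  by case: ifP => _; rewrite ?filter_subseq ?subseq_refl.
rewrite /new_C /red_step2; case: (red_step1 _ _ _).1 step1 => [b'|] //=.
by case: ifP => //= _; apply: subseq_trans (filter_subseq _ _).
Qed.

Section RedTurn.
Variables (s : state R B) (r : R).
Hypothesis cs : consistent s.

Lemma red_turn_proposer b : cand s r = Some b ->
  new_pr prefB s r = (if msg_accept prefB s b r then Some b else None) /\
  new_C prefB s r = (if msg_accept prefB s b r then Cl s r
                     else filter (predC1 b) (Cl s r)).
Proof.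
case: cs => cand_free _ _ pb_pr Hc; have [Hp _] := cand_free _ _ Hc.
have pbNr : (pb s b == Some r) = false by rewrite pb_pr Hp.
rewrite /new_pr /new_C /red_step2 /red_step1 Hc Hp.
have -> : msg_reject prefB s b r = ~~ msg_accept prefB s b r.
  rewrite /msg_reject /msg_accept /switches Hc eqxx /=.
  have -> : has_prop s b by apply/existsP; exists r; rewrite Hc.
  case: eqP => [-> | _]; rewrite ?andbF //= [Some r == _]eq_sym.
  by case: eqP => // /eqP; rewrite pbNr.
by case: ifP => //= _; rewrite /msg_break pbNr andbF.
Qed.

Lemma red_turn_partner b : cand s r = None -> pr s r = Some b ->
  new_pr prefB s r = (if switches prefB s b then None else Some b) /\
  new_C prefB s r = (if switches prefB s b then filter (predC1 b) (Cl s r)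
                     else Cl s r).
Proof.
case: cs => _ _ _ pb_pr Hc Hp.
rewrite /new_pr /new_C /red_step2 /red_step1 Hc Hp /= /msg_break pb_pr Hp eqxx.
by rewrite andbT; case: switches.
Qed.

Lemma red_turn_idle : cand s r = None -> pr s r = None ->
  new_pr prefB s r = None /\ new_C prefB s r = Cl s r.
Proof. by move=> Hc Hp; rewrite /new_pr /new_C /red_step2 /red_step1 Hc Hp. Qed.

End RedTurn.

Lemma new_pb_new_pr s r b : consistent s ->
  (new_pb prefB s b == Some r) = (new_pr prefB s r == Some b).
Proof.
move=> cs; have [cand_free _ _ pb_pr] := cs.
have not_cand : cand s r != Some b ->
    (new_pb prefB s b == Some r) = ~~ switches prefB s b && (pr s r == Some b).
  move=> Nc; rewrite /new_pb -pb_pr; case: ifP => //= sw.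
  by apply: contraNF Nc => /eqP /(switches_cand sw) ->.
case Hc: (cand s r) => [b0|].
  have [Hp _] := cand_free _ _ Hc; rewrite (red_turn_proposer cs Hc).1.
  have [<- | b0b] := eqVneq b0 b; last first.
    have Nb : Some b0 != Some b by apply: contra_neq b0b => -[].
    by rewrite not_cand ?Hc // Hp andbF; case: msg_accept; rewrite // (negPf Nb).
  rewrite /new_pb /msg_accept; case: ifP => sw; first by case: eqP; rewrite ?eqxx.
  by rewrite pb_pr Hp.
rewrite not_cand ?Hc //; case Hp: (pr s r) => [b'|]; last first.
  by rewrite (red_turn_idle Hc Hp).1 andbF.
rewrite (red_turn_partner cs Hc Hp).1.
have [<- | b'b] := eqVneq b' b; first by case: switches.
have Nb : Some b' != Some b by apply: contra_neq b'b => -[].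
by rewrite (negPf Nb) andbF; case: switches; rewrite // (negPf Nb).
Qed.

Lemma consistent_round s : consistent s -> consistent (round prefB s).
Proof.
move=> cs; have [cand_free partner_head sub_pref _] := cs; split => /=.
- by move=> r b; rewrite /new_cand; case: eqP => // -> ->.
- move=> r b; case Hc: (cand s r) => [b0|].
    have [_ Hh] := cand_free _ _ Hc; have [-> ->] := red_turn_proposer cs Hc.
    by case: msg_accept => // -[<-].
  case Hp: (pr s r) => [b'|]; last by rewrite (red_turn_idle Hc Hp).1.
  have [-> ->] := red_turn_partner cs Hc Hp.
  by case: switches => // -[<-]; apply: partner_head.
- by move=> r; apply: subseq_trans (new_C_subseq s r) (sub_pref r).
- by move=> r b; apply: new_pb_new_pr.
Qed.

Lemma consistent_st i : consistent (st prefR prefB i).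
Proof. by elim: i => [|i IH]; [apply: consistent_init | apply: consistent_round]. Qed.

(* True of every state produced by a round, but not of the initial state. *)
Definition free_proposes s := forall r, pr s r = None -> cand s r = ohead (Cl s r).

Lemma free_proposes_st i : free_proposes (st prefR prefB i.+1).
Proof. by move=> r /= Hp; rewrite /new_cand Hp. Qed.

Lemma freed_in_round s r : consistent s -> free_proposes s ->
  new_pr prefB s r = None -> new_C prefB s r != [::] ->
  exists2 x, ohead (Cl s r) = Some x &
    new_C prefB s r = filter (predC1 x) (Cl s r) /\
    ((pr s r = None /\ cand s r = Some x) \/ (pr s r = Some x /\ switches prefB s x)).
Proof.
move=> cs fp; have [cand_free partner_head _ _] := cs.
case Hc: (cand s r) => [b|].
  have [Hp Hh] := cand_free _ _ Hc; have [-> ->] := red_turn_proposer cs Hc.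
  by case: msg_accept => // _ _; exists b => //; split => //; left.
case Hp: (pr s r) => [b'|]; last first.
  by have [_ ->] := red_turn_idle Hc Hp; move: (fp r Hp); rewrite Hc; case: Cl.
have [-> ->] := red_turn_partner cs Hc Hp.
case sw: switches => // _ _; exists b'; first exact: partner_head.
by split => //; right.
Qed.

End Round.

(* The potential f(r) in an arbitrary state: pot w i r is pot_of w (st i) r. *)
Definition pot_of (R B : finType) (w : R -> B -> nat) (s : state R B) (r : R) : nat :=
  match pr s r, Cl s r with
  | None, b :: _ => w r b
  | _, _ => 0
  end.

Lemma pot_of_free (R B : finType) (w : R -> B -> nat) s r x :
  pr s r = None -> ohead (Cl s r) = Some x -> pot_of w s r = w r x.
Proof. by rewrite /pot_of => ->; case: Cl => //= _ _ [->]. Qed.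

Section Potential.
Variables (R B : finType) (adj : R -> B -> bool).
Variables (prefR : R -> seq B) (prefB : B -> seq R) (w : R -> B -> nat).
Hypothesis valid : valid_instance adj prefR prefB.
Hypothesis wprefs : respects_prefs adj prefR prefB w.
Implicit Types (s : state R B) (r : R) (b : B).

Lemma weight_head_ge C r x y :
  subseq C (prefR r) -> ohead C = Some x -> y \in C -> w r y <= w r x.
Proof.
case: C => [|z C] //= sub [<-]; rewrite inE => /orP[/eqP -> // | yC].
have [_ _ /(_ r) [uR memR] _] := valid; have [_ wR _] := wprefs.
apply: wR; rewrite -?memR; last exact: index_head_subseq_lt uR sub yC.
  by rewrite (mem_subseq sub) ?mem_head.
by rewrite (mem_subseq sub) // inE yC orbT.
Qed.

Lemma weight_bchoice_ge s b r r' :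
  bchoice prefB s b = Some r' -> pb s b = Some r -> adj r b -> w r b <= w r' b.
Proof.
rewrite /bchoice; set P := fun r => _ || _; case E: filter => [|z C] //= [<-] pbr arb.
have [_ _ _ /(_ b) [uB memB]] := valid; have [_ _ wB] := wprefs.
have : r \in filter P (prefB b) by rewrite mem_filter /P pbr eqxx orbT memB.
have sub : subseq (z :: C) (prefB b) by rewrite -E filter_subseq.
rewrite E inE => /orP[/eqP -> // | rC].
apply: wB => //; last exact: index_head_subseq_lt uB sub rC.
by rewrite -memB (mem_subseq sub) ?mem_head.
Qed.

Lemma pot_round_gt0_free s r : 0 < pot_of w (round prefB s) r ->
  new_pr prefB s r = None /\ new_C prefB s r != [::].
Proof. by rewrite /pot_of /=; case: new_pr => //; case: new_C. Qed.

Lemma pot_round_gt0_head s r : consistent prefR s -> free_proposes s ->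
  0 < pot_of w (round prefB s) r ->
  exists2 x, ohead (Cl s r) = Some x &
    [/\ pot_of w (round prefB s) r <= w r x, x \notin new_C prefB s r &
      (pr s r = None /\ cand s r = Some x) \/ (pr s r = Some x /\ switches prefB s x)].
Proof.
move=> cs fp pos; have [Enp EnC] := pot_round_gt0_free pos.
have [x Hh [EC how]] := freed_in_round cs fp Enp EnC.
have xN : x \notin new_C prefB s r by rewrite EC mem_filter /= eqxx.
exists x => //; split => //.
have [_ _ sub_pref _] := cs.
rewrite /pot_of /= Enp EC; case E: filter => [|y t] //.
apply: weight_head_ge (sub_pref r) Hh _.
have : y \in filter (predC1 x) (Cl s r) by rewrite E mem_head.
by rewrite mem_filter => /andP[].
Qed.

Definition dropped s r b := (b \in Cl s r) && (b \notin new_C prefB s r).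

Lemma pot_round_le_dropped s r : consistent prefR s -> free_proposes s ->
  pot_of w (round prefB s) r <= \sum_(b | dropped s r b) w r b.
Proof.
move=> cs fp; have [-> // | pos] := posnP (pot_of w (round prefB s) r).
have [x Hh [le xN _]] := pot_round_gt0_head cs fp pos.
rewrite (bigD1 x) /=; first exact: leq_trans le (leq_addr _ _).
by rewrite /dropped (mem_ohead Hh).
Qed.

(* The red that takes over the partner of r in the round (r itself if r is
   unmatched). *)
Definition rival s r :=
  if pr s r is Some b then odflt r (bchoice prefB s b) else r.

Lemma pot_round_le_rival s r : consistent prefR s -> free_proposes s ->
  0 < pot_of w (round prefB s) r ->
  pot_of w (round prefB s) r <= pot_of w s (rival s r).
Proof.
move=> cs fp pos; have [cand_free _ sub_pref pb_pr] := cs.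
have [x Hh [le _ [[Hp _] | [Hp sw]]]] := pot_round_gt0_head cs fp pos;
  apply: leq_trans le _.
  by rewrite /rival Hp (pot_of_free _ Hp Hh).
case Hb: (bchoice prefB s x) => [r'|]; last first.
  by move: sw; rewrite /switches Hb eqxx andbF.
have [Hp' Hh'] := cand_free _ _ (switches_cand sw Hb).
rewrite /rival Hp Hb (pot_of_free _ Hp' Hh'); apply: weight_bchoice_ge Hb _ _.
  by apply/eqP; rewrite pb_pr Hp.
have [_ _ /(_ r) [_ <-] _] := valid.
exact: mem_subseq (sub_pref r) _ (mem_ohead Hh).
Qed.

Lemma rival_inj s : consistent prefR s -> free_proposes s ->
  {in [pred r | 0 < pot_of w (round prefB s) r] &, injective (rival s)}.
Proof.
move=> cs fp; have [_ _ _ pb_pr] := cs.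
have matched r b : 0 < pot_of w (round prefB s) r -> pr s r = Some b ->
    cand s (rival s r) = Some b /\ msg_accept prefB s b (rival s r).
  move=> pos Hp; have [x _ [_ _ [[Hp' _] | [Hp' sw]]]] := pot_round_gt0_head cs fp pos.
    by rewrite Hp in Hp'.
  have Exb : x = b by move: Hp'; rewrite Hp => -[].
  subst x.
  case Hb: (bchoice prefB s b) => [r'|]; last first.
    by move: sw; rewrite /switches Hb eqxx andbF.
  by rewrite /rival Hp Hb /msg_accept sw Hb eqxx (switches_cand sw Hb).
have unaccepted r b : 0 < pot_of w (round prefB s) r -> cand s r = Some b ->
    ~~ msg_accept prefB s b r.
  move=> pos Hc; have [Enp _] := pot_round_gt0_free pos.
  by move: Enp; rewrite (red_turn_proposer prefB cs Hc).1; case: msg_accept.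
move=> r1 r2 /= pos1 pos2.
case E1: (pr s r1) => [b1|]; case E2: (pr s r2) => [b2|].
- have [c1 _] := matched _ _ pos1 E1; have [c2 _] := matched _ _ pos2 E2.
  move=> Eg; move: c1; rewrite Eg c2 => -[Eb]; subst b2.
  have p1 : pb s b1 == Some r1 by rewrite pb_pr E1.
  have p2 : pb s b1 == Some r2 by rewrite pb_pr E2.
  by move: p1 p2 => /eqP -> /eqP [].
- have [c1 a1] := matched _ _ pos1 E1; rewrite {2}/rival E2 => Eg.
  by rewrite Eg in c1 a1; rewrite (negPf (unaccepted _ _ pos2 c1)) in a1.
- have [c2 a2] := matched _ _ pos2 E2; rewrite {1}/rival E1 => Eg.
  by rewrite -Eg in c2 a2; rewrite (negPf (unaccepted _ _ pos1 c2)) in a2.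
- by rewrite /rival E1 E2.
Qed.

Lemma pot_sum_round_le s : consistent prefR s -> free_proposes s ->
  \sum_r pot_of w (round prefB s) r <= \sum_r pot_of w s r.
Proof.
move=> cs fp; set A := [pred r | 0 < pot_of w (round prefB s) r].
rewrite (bigID A) /= [X in _ + X]big1 ?addn0 => [|r]; last first.
  by rewrite lt0n negbK => /eqP.
apply: (@leq_trans (\sum_(r in A) pot_of w s (rival s r))).
  by apply: leq_sum => r; apply: pot_round_le_rival.
rewrite -(big_imset _ (rival_inj cs fp)) /=.
by rewrite [X in _ <= X](bigID [in rival s @: A]) leq_addr.
Qed.

Lemma wset_lost_succ i :
  wset w (lost prefR prefB i.+1) =
  wset w (lost prefR prefB i) +
  \sum_r \sum_(b | dropped (st prefR prefB i) r b) w r b.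
Proof.
set s := st prefR prefB i; have [_ _ sub_pref _] := consistent_st prefR prefB i.
have sub_new r : {subset new_C prefB s r <= Cl s r}.
  exact: mem_subseq (new_C_subseq prefB s r).
have lost_mono : lost prefR prefB i \subset lost prefR prefB i.+1.
  apply/subsetP => -[r b]; rewrite !inE /= => /andP[-> bN].
  by apply: contra bN; apply: sub_new.
rewrite /wset (big_setID (lost prefR prefB i)) (setIidPr lost_mono) /=; congr (_ + _).
rewrite pair_big_dep; apply: eq_bigl => -[r b]; rewrite !inE /dropped /=.
have := mem_subseq (sub_pref r) (x := b); have := sub_new r b.
by case: (b \in prefR r); case: (b \in Cl s r); case: (b \in new_C _ _ _);
  move=> // _ /(_ isT).
Qed.

Lemma potR_succ i :
  potR prefR prefB w i.+1 = \sum_r pot_of w (round prefB (st prefR prefB i)) r.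
Proof. by []. Qed.

Lemma wset_lost_pot i :
  wset w (lost prefR prefB i.+1) + potR prefR prefB w i.+2 <=
  wset w (lost prefR prefB i.+2).
Proof.
rewrite (wset_lost_succ i.+1) leq_add2l potR_succ; apply: leq_sum => r _.
exact: pot_round_le_dropped _ (consistent_st _ _ _)
  (@free_proposes_st _ _ prefR prefB i).
Qed.

Lemma potR_succ_le i : potR prefR prefB w i.+2 <= potR prefR prefB w i.+1.
Proof.
rewrite !potR_succ.
exact: pot_sum_round_le (consistent_st _ _ _) (@free_proposes_st _ _ prefR prefB i).
Qed.

End Potential.

Theorem lemma4 (R B : finType) (adj : R -> B -> bool)
  (prefR : R -> seq B) (prefB : B -> seq R) (w : R -> B -> nat) :
  valid_instance adj prefR prefB ->
  respects_prefs adj prefR prefB w ->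
  forall i : nat, 2 <= i ->
    (i - 1) * potR prefR prefB w i <= wset w (lost prefR prefB i).
Proof.
move=> valid wprefs [|[|k]] // _; rewrite subSS subn0.
elim: k => [|k IH].
  by rewrite mul1n (leq_trans _ (wset_lost_pot valid wprefs 0)) ?leq_addl.
rewrite mulSn addnC (leq_trans _ (wset_lost_pot valid wprefs k.+1)) // leq_add //.
exact: leq_trans (leq_mul (leqnn _) (potR_succ_le valid wprefs k.+1)) IH.
Qed.
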